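(* Let $\mathcal{D}$ be a dagger category equipped with a conservative dagger functor $F\colon\mathcal{D}\to\mathrm{Hilb}$. Suppose that every positive endomorphism $f\colon c\to c$ in $\mathcal{D}$ is end-positive. Then $\mathcal{D}$ is minimal.
   Context: A dagger category is a category with an identity-on-objects functor $\dagger$ to its opposite with $f^{\dagger\dagger}=f$; a dagger functor satisfies $F(f^\dagger)=F(f)^\dagger$. $\mathrm{Hilb}$ is the dagger category of finite-dimensional complex Hilbert spaces with adjoints. An endomorphism $f\colon c\to c$ is positive if $f=g^\dagger g$ for some morphism $g\colon c\to c'$, and end-positive if $f=g^\dagger g$ for some endomorphism $g\colon c\to c$. A functor is conservative if it reflects isomorphisms. $\mathcal{D}$ is minimal if the map $\pi_0^U(\mathcal{D})\to\pi_0(\mathcal{D})$ from unitary-isomorphism classes of objects ($u$ unitary iff $u^\dagger=u^{-1}$) to isomorphism classes is bijective. *)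

From mathcomp Require Import all_boot all_algebra.
From mathcomp Require Import complex.
From mathcomp Require Import Rstruct.
Import GRing.Theory Num.Theory.

Set Implicit Arguments.
Unset Strict Implicit.
Unset Printing Implicit Defensive.

Local Open Scope ring_scope.

Record DaggerCat := {
  Obj :> Type;
  Hom : Obj -> Obj -> Type;
  idm : forall a : Obj, Hom a a;
  comp : forall a b c : Obj, Hom b c -> Hom a b -> Hom a c;
  dag : forall a b : Obj, Hom a b -> Hom b a;
  comp_id_l : forall a b (f : Hom a b), comp (idm b) f = f;
  comp_id_r : forall a b (f : Hom a b), comp f (idm a) = f;
  comp_assoc : forall a b c d (h : Hom c d) (g : Hom b c) (f : Hom a b),
      comp h (comp g f) = comp (comp h g) f;
  dag_id : forall a, dag (idm a) = idm a;
  dag_comp : forall a b c (g : Hom b c) (f : Hom a b),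
      dag (comp g f) = comp (dag f) (dag g);
  dag_invol : forall a b (f : Hom a b), dag (dag f) = f
}.

Arguments idm {D} a : rename.
Arguments comp {D a b c} g f : rename.
Arguments dag {D a b} f : rename.

Section DaggerNotions.
Variable D : DaggerCat.

Definition is_iso (a b : D) (f : Hom a b) : Prop :=
  exists g : Hom b a, comp g f = idm a /\ comp f g = idm b.

Definition is_unitary (a b : D) (u : Hom a b) : Prop :=
  comp (dag u) u = idm a /\ comp u (dag u) = idm b.

Definition positive (c : D) (f : Hom c c) : Prop :=
  exists (c' : D) (g : Hom c c'), f = comp (dag g) g.

Definition end_positive (c : D) (f : Hom c c) : Prop :=
  exists g : Hom c c, f = comp (dag g) g.

Definition isomorphic (a b : D) : Prop := exists f : Hom a b, is_iso f.
Definition unitarily_isomorphic (a b : D) : Prop :=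
  exists u : Hom a b, is_unitary u.

(* The map pi_0^U(D) -> pi_0(D), [c]_U |-> [c], is always well defined and
   surjective; it is bijective iff it is injective, i.e. iff isomorphic
   objects are unitarily isomorphic. *)
Definition minimal : Prop :=
  forall a b : D, isomorphic a b -> unitarily_isomorphic a b.

End DaggerNotions.

Record DaggerFunctor (D E : DaggerCat) := {
  fobj :> D -> E;
  fmap : forall a b : D, Hom a b -> Hom (fobj a) (fobj b);
  fmap_id : forall a : D, fmap (idm a) = idm (fobj a);
  fmap_comp : forall (a b c : D) (g : Hom b c) (f : Hom a b),
      fmap (comp g f) = comp (fmap g) (fmap f);
  fmap_dag : forall (a b : D) (f : Hom a b), fmap (dag f) = dag (fmap f)
}.

Arguments fmap {D E} F {a b} f : rename.

Definition conservative (D E : DaggerCat) (F : DaggerFunctor D E) : Prop :=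
  forall (a b : D) (f : Hom a b), is_iso (fmap F f) -> is_iso f.

(* Finite-dimensional complex Hilbert spaces, in skeletal form: the object
   n stands for C^n with its standard inner product, a morphism n -> m is a
   linear map, i.e. an m x n complex matrix, composition is matrix product
   and the dagger is the adjoint (conjugate transpose). *)
Definition Cplx := complex Rdefinitions.R.

Definition mxadj (m n : nat) (A : 'M[Cplx]_(m, n)) : 'M[Cplx]_(n, m) :=
  \matrix_(i < n, j < m) (A j i)^*.

Definition HilbHom (n m : nat) : Type := 'M[Cplx]_(m, n).

Lemma hilb_comp_id_l n m (f : HilbHom n m) : (1%:M : 'M[Cplx]_m) *m f = f.
Proof. exact: mul1mx. Qed.

Lemma hilb_comp_id_r n m (f : HilbHom n m) : f *m (1%:M : 'M[Cplx]_n) = f.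
Proof. exact: mulmx1. Qed.

Lemma hilb_comp_assoc a b c d (h : HilbHom c d) (g : HilbHom b c)
  (f : HilbHom a b) : h *m (g *m f) = (h *m g) *m f.
Proof. exact: mulmxA. Qed.

Lemma hilb_dag_id n : mxadj (1%:M : 'M[Cplx]_n) = 1%:M.
Proof.
apply/matrixP=> i j; rewrite !mxE.
by case: (i =P j) => [->|/eqP]; rewrite ?eqxx ?conjC1 // eq_sym => /negbTE ->; rewrite conjC0.
Qed.

Lemma hilb_dag_comp a b c (g : HilbHom b c) (f : HilbHom a b) :
  mxadj (g *m f) = mxadj f *m mxadj g.
Proof.
apply/matrixP=> i j; rewrite !mxE rmorph_sum; apply: eq_bigr => k _.
by rewrite !mxE rmorphM mulrC.
Qed.

Lemma hilb_dag_invol a b (f : HilbHom a b) : mxadj (mxadj f) = f.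
Proof. by apply/matrixP=> i j; rewrite !mxE conjCK. Qed.

Definition Hilb : DaggerCat :=
  @Build_DaggerCat nat HilbHom
    (fun n => 1%:M)
    (fun a b c (g : HilbHom b c) (f : HilbHom a b) => g *m f)
    (fun a b (f : HilbHom a b) => mxadj f)
    hilb_comp_id_l hilb_comp_id_r hilb_comp_assoc
    hilb_dag_id hilb_dag_comp hilb_dag_invol.

(* Let f : a -> b be an isomorphism. The positive endomorphism f^dag f is
   end-positive, f^dag f = g^dag g with g : a -> a, and since f^dag f is
   invertible, g has a left inverse.
   Its image under F is a square matrix with a left inverse, hence invertible,
   and conservativity makes g an isomorphism. Then u = f g^-1 satisfies
   u^dag u = g^-dag (f^dag f) g^-1 = g^-dag g^dag g g^-1 = 1, and an
   isomorphism whose dagger is a left inverse is unitary. *)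
From mathcomp Require Import all_boot all_algebra complex Rstruct.

Set Implicit Arguments.
Unset Strict Implicit.
Unset Printing Implicit Defensive.

Section DaggerCategoryFacts.
Variable D : DaggerCat.

Lemma iso_dag (a b : D) (f : Hom a b) : is_iso f -> is_iso (dag f).
Proof.
case=> fi [fif ffi]; exists (dag fi).
by rewrite -!dag_comp fif ffi !dag_id.
Qed.

Lemma iso_comp (a b c : D) (g : Hom b c) (f : Hom a b) :
  is_iso g -> is_iso f -> is_iso (comp g f).
Proof.
case=> gi [gig ggi] [fi [fif ffi]]; exists (comp fi gi); split.
  by rewrite -comp_assoc (comp_assoc gi) gig comp_id_l fif.
by rewrite -comp_assoc (comp_assoc f) ffi comp_id_l ggi.
Qed.

Lemma iso_dag_comp_self (a b : D) (f : Hom a b) :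
  is_iso f -> is_iso (comp (dag f) f).
Proof. by move=> isof; apply: iso_comp => //; apply: iso_dag. Qed.

Lemma iso_left_inverse_right (a b : D) (f : Hom a b) (g : Hom b a) :
  is_iso f -> comp g f = idm a -> comp f g = idm b.
Proof.
case=> fi [_ ffi] gf; suff -> : g = fi by [].
by rewrite -[g]comp_id_r -ffi comp_assoc gf comp_id_l.
Qed.

Lemma unitary_iso_dagl (a b : D) (u : Hom a b) :
  is_iso u -> comp (dag u) u = idm a -> is_unitary u.
Proof. by move=> isou uu; split; last exact: iso_left_inverse_right. Qed.

Lemma left_invertible_iso_comp (a b c : D) (h : Hom b c) (g : Hom a b) :
  is_iso (comp h g) -> exists k : Hom b a, comp k g = idm a.
Proof. by case=> hgi [hgihg _]; exists (comp hgi h); rewrite -comp_assoc. Qed.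

Lemma unitary_comp_inverse (a b : D) (f : Hom a b) (g gi : Hom a a) :
  is_iso f -> comp gi g = idm a -> comp g gi = idm a ->
  comp (dag f) f = comp (dag g) g -> is_unitary (comp f gi).
Proof.
move=> isof gig ggi dagff; apply: unitary_iso_dagl.
  by apply: iso_comp => //; exists g.
rewrite dag_comp -comp_assoc (comp_assoc (dag f)) dagff.
by rewrite -(comp_assoc (dag g)) ggi comp_id_r -dag_comp ggi dag_id.
Qed.

End DaggerCategoryFacts.

Lemma hilb_iso_left_invertible (n : Hilb) (A B : @Hom Hilb n n) :
  comp B A = idm n -> is_iso A.
Proof.
by move=> BA; exists B; split => //; apply: (@mulmx1C (Cplx : comUnitRingType)).
Qed.

Lemma conservative_endo_left_invertible (D : DaggerCat)
    (F : DaggerFunctor D Hilb) (a : D) (g k : Hom a a) :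
  conservative F -> comp k g = idm a -> is_iso g.
Proof.
move=> Fcons kg; apply: Fcons; apply: (@hilb_iso_left_invertible _ _ (fmap F k)).
by rewrite -fmap_comp kg fmap_id.
Qed.

Theorem mainTheorem4 (D : DaggerCat) (F : DaggerFunctor D Hilb) :
  conservative F ->
  (forall (c : D) (f : Hom c c), positive f -> end_positive f) ->
  minimal D.
Proof.
move=> Fcons posE a b [f isof].
have [g dagff] : end_positive (comp (dag f) f) by apply: posE; exists b, f.
have [k kg] : exists k : Hom a a, comp k g = idm a.
  apply: (left_invertible_iso_comp (h := dag g)).
  by rewrite -dagff; apply: iso_dag_comp_self.
have [gi [gig ggi]] := conservative_endo_left_invertible Fcons kg.
by exists (comp f gi); exact: unitary_comp_inverse isof gig ggi dagff.
Qed.
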